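(* Let $G$ be a connected graph and let $H$ be a hypergraph of degree 2. If $G^d$ is a hypergraph dilution of $H$, then $G$ is a minor of $H^d$.
   Context: A hypergraph $H$ is a pair $(V(H),E(H))$ with $E(H)\subseteq 2^{V(H)}$ a set; graphs are hypergraphs all of whose edges have size 2. For a vertex $v$, $I_v$ is the set of edges containing $v$; the degree of $H$ is $\max_v|I_v|$. The dual $H^d$ has $V(H^d)=E(H)$ and $E(H^d)=\{I_v : v\in V(H)\}$. A graph $G$ is a minor of a hypergraph $F$ if it is a minor of the primal graph of $F$ (vertices $V(F)$, $x,y$ adjacent iff some edge of $F$ contains both), i.e., there is $\mu:V(G)\to 2^{V(F)}$ with each $\mu(v)$ connected, the $\mu(v)$ pairwise disjoint, and for adjacent $u,v$ some primal edge joining $\mu(u)$ and $\mu(v)$. $H$ is a hypergraph dilution of $H'$ if $H$ is isomorphic to a hypergraph reachable from $H'$ by a finite sequence of: deleting a vertex (from the vertex set and all edges); deleting an edge that is a proper subset of another edge; merging on a vertex $v$, i.e., replacing all edges of $I_v$ by $(\bigcup I_v)\setminus\{v\}$. *)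

From mathcomp Require Import all_boot.
Set Implicit Arguments. Unset Strict Implicit. Unset Printing Implicit Defensive.

Definition hgraph (T : finType) := ({set T} * {set {set T}})%type.

Section Hyper.
Variable T : finType.
Implicit Types (H : hgraph T) (v x y : T) (S : {set T}).

Definition wf_hg H : Prop := forall e, e \in H.2 -> e \subset H.1.

Definition incident H v : {set {set T}} := [set e in H.2 | v \in e].

Definition hdeg H : nat := \max_(v in H.1) #|incident H v|.

Definition is_graph H : Prop := wf_hg H /\ forall e, e \in H.2 -> #|e| = 2.

Definition primal_adj H : rel T :=
  fun x y => (x != y) && [exists e in H.2, (x \in e) && (y \in e)].

Definition connected_in H S : Prop :=
  forall x y, x \in S -> y \in S ->
    connect (fun a b => [&& a \in S, b \in S & primal_adj H a b]) x y.

Definition hconnected H : Prop := connected_in H H.1.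

Definition del_vertex H v : hgraph T := (H.1 :\ v, [set e :\ v | e in H.2]).
Definition del_edge H (e : {set T}) : hgraph T := (H.1, H.2 :\ e).
Definition merge H v : hgraph T :=
  (H.1, (H.2 :\: incident H v) :|: [set (\bigcup_(e in incident H v) e) :\ v]).

Inductive dil_step H : hgraph T -> Prop :=
| DelVertex v : v \in H.1 -> dil_step H (del_vertex H v)
| DelEdge e f : e \in H.2 -> f \in H.2 -> e \proper f -> dil_step H (del_edge H e)
| Merge v : v \in H.1 -> incident H v != set0 -> dil_step H (merge H v).

Inductive dil_reach H : hgraph T -> Prop :=
| DilRefl : dil_reach H H
| DilStep H1 H2 : dil_reach H H1 -> dil_step H1 H2 -> dil_reach H H2.

End Hyper.

Definition hiso (T1 T2 : finType) (H1 : hgraph T1) (H2 : hgraph T2) : Prop :=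
  exists f : T1 -> T2, {in H1.1 &, injective f} /\ f @: H1.1 = H2.1 /\
    H2.2 = [set f @: e | e : {set T1} in H1.2].

Definition dilution (T1 T2 : finType) (K : hgraph T1) (H : hgraph T2) : Prop :=
  exists H', dil_reach H H' /\ hiso H' K.

Definition dual (T : finType) (H : hgraph T) : hgraph {set T} :=
  (H.2, [set incident H v | v in H.1]).

Definition is_minor (T1 T2 : finType) (G : hgraph T1) (F : hgraph T2) : Prop :=
  exists mu : T1 -> {set T2},
    (forall v, v \in G.1 -> [/\ mu v != set0, mu v \subset F.1 & connected_in F (mu v)]) /\
    (forall u v, u \in G.1 -> v \in G.1 -> u != v -> [disjoint mu u & mu v]) /\
    (forall u v, u \in G.1 -> v \in G.1 -> primal_adj G u v ->
       exists x y, [/\ x \in mu u, y \in mu v & primal_adj F x y]).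

From Pilot Require Import Defs.
From mathcomp Require Import all_boot.

Set Implicit Arguments.
Unset Strict Implicit.
Unset Printing Implicit Defensive.

(* Every edge of a dilution K of H arises by merging a set of edges of H that
   is connected in H^d; distinct edges of K come from disjoint such sets, and
   every vertex of an edge e of K lies in one of the edges merged into e.  So
   sending e to its set of merged edges exhibits K^d as a minor of H^d.  If
   G^d is isomorphic to K and the stars I_u of the vertices of G are pairwise
   distinct, u |-> I_u embeds G into (G^d)^d, hence into K^d, and G is a minor
   of H^d.  Otherwise two vertices of the connected graph G have the same star,
   so G is a single edge, and the two edges of H at a vertex of degree 2 are
   adjacent in H^d. *)

Section PrimalGraph.
Variables (U : finType) (F : hgraph U).

Lemma primal_adj_sym : symmetric (primal_adj F).
Proof.
move=> x y; rewrite /primal_adj eq_sym; congr (_ && _).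
by apply: eq_existsb => e; rewrite [(x \in e) && _]andbC.
Qed.

Definition primal_adj_in (S : {set U}) : rel U :=
  fun a b => [&& a \in S, b \in S & primal_adj F a b].

Lemma connect_primal_adj_in_sub (S S' : {set U}) :
  S \subset S' -> subrel (connect (primal_adj_in S)) (connect (primal_adj_in S')).
Proof.
move=> sSS'; apply: connect_sub => a b /and3P[aS bS ab]; apply: connect1.
by rewrite /primal_adj_in (subsetP sSS' _ aS) (subsetP sSS' _ bS).
Qed.

Lemma connected_in1 x : connected_in F [set x].
Proof. by move=> a b /set1P-> /set1P->. Qed.

Lemma connected_in_bigcup (J : finType) (P : {pred J}) (S : J -> {set U}) :
  (forall i, P i -> connected_in F (S i)) ->
  (forall i j, P i -> P j ->
     exists a b, [/\ a \in S i, b \in S j & (a == b) || primal_adj F a b]) ->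
  connected_in F (\bigcup_(i | P i) S i).
Proof.
move=> connS linkS x y /bigcupP[i Pi xi] /bigcupP[j Pj yj].
have inside k a b : P k -> a \in S k -> b \in S k ->
    connect (primal_adj_in (\bigcup_(i | P i) S i)) a b.
  move=> Pk ak bk; apply: connect_primal_adj_in_sub (connS k Pk a b ak bk).
  exact: bigcup_sup.
have [a [b [ai bj ab]]] := linkS i j Pi Pj.
apply: connect_trans (inside i x a Pi xi ai) (connect_trans _ (inside j b y Pj bj yj)).
case/orP: ab => [/eqP-> | ab]; first exact: connect0.
by apply: connect1; rewrite /primal_adj_in ab andbT; apply/andP; split;
  apply/bigcupP; [exists i | exists j].
Qed.

End PrimalGraph.

Lemma dual_adj (T : finType) (H : hgraph T) w x y :
  w \in H.1 -> x \in incident H w -> y \in incident H w -> x != y ->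
  primal_adj (dual H) x y.
Proof.
move=> wH xw yw xy; rewrite /primal_adj xy; apply/existsP.
by exists (incident H w); rewrite /= imset_f ?xw ?yw.
Qed.

Lemma imset_section (T rT : finType) (f : {set T} -> rT) (D : {set {set T}}) :
  exists s : rT -> {set T}, {in f @: D, forall b, s b \in D /\ f (s b) = b}.
Proof.
exists (fun b => odflt set0 [pick a in D | f a == b]) => _ /imsetP[a aD ->].
by case: pickP => [a' /andP[a'D /eqP] | /(_ a)] //=; rewrite aD eqxx.
Qed.

Section DilutionModel.
Variables (T : finType) (H : hgraph T).

Record dil_model (K : hgraph T) (phi : {set T} -> {set {set T}}) : Prop :=
  DilModel {
    model_wf : wf_hg K;
    model_vertices : K.1 \subset H.1;
    model_branch : forall e, e \in K.2 ->
      [/\ phi e != set0, phi e \subset H.2 & connected_in (dual H) (phi e)];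
    model_disjoint : forall e1 e2, e1 \in K.2 -> e2 \in K.2 -> e1 != e2 ->
      [disjoint phi e1 & phi e2];
    model_cover : forall e w, e \in K.2 -> w \in e ->
      exists2 x, x \in phi e & w \in x
  }.

Lemma model_refl : wf_hg H -> dil_model H (fun e => [set e]).
Proof.
move=> wfH; split=> //.
- move=> e eH; split; last exact: connected_in1.
    by apply/set0Pn; exists e; rewrite inE.
  by rewrite sub1set.
- by move=> e1 e2 _ _ e12; rewrite disjoints1 inE.
- by move=> e w eH we; exists e; rewrite ?inE.
Qed.

Variables (K : hgraph T) (phi : {set T} -> {set {set T}}).
Hypothesis phiK : dil_model K phi.

Lemma model_del_vertex v : exists phi', dil_model (del_vertex K v) phi'.
Proof.
have [pre preP] := imset_section (fun e => e :\ v) K.2.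
have [wfK KH branch disj cover] := phiK.
exists (fun g => phi (pre g)); split=> /=.
- by move=> _ /imsetP[e eK ->]; apply/setSD/wfK.
- exact: subset_trans (subD1set _ _) KH.
- by move=> g /preP[gK _]; apply: branch.
- move=> g1 g2 /preP[g1K pre_g1] /preP[g2K pre_g2] g12; apply: disj => //.
  by apply: contra g12 => /eqP eq_pre; rewrite -pre_g1 -pre_g2 eq_pre.
- move=> g w /preP[gK pre_g] wg; apply: cover gK _.
  by move: wg; rewrite -{1}pre_g => /setD1P[].
Qed.

Lemma model_del_edge e : dil_model (del_edge K e) phi.
Proof.
have [wfK KH branch disj cover] := phiK.
split=> //= [g /setD1P[_ /wfK] //|g /setD1P[_ /branch] //||g w /setD1P[_]].
- by move=> g1 g2 /setD1P[_ g1K] /setD1P[_ g2K]; apply: disj.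
- exact: cover.
Qed.

Lemma model_cover_incident e w : e \in K.2 -> w \in e ->
  exists2 x, x \in phi e & x \in incident H w.
Proof.
move=> eK we; have [x xe wx] := model_cover phiK eK we.
by have [_ eH _] := model_branch phiK eK; exists x; rewrite // inE (subsetP eH x xe).
Qed.

Lemma model_star_connected v : v \in K.1 ->
  connected_in (dual H) (\bigcup_(e in incident K v) phi e).
Proof.
move=> vK; apply: connected_in_bigcup => [e /setIdP[eK _] | e1 e2].
  by have [] := model_branch phiK eK.
move=> /setIdP[e1K ve1] /setIdP[e2K ve2].
have [[x xe1 xv] [y ye2 yv]] := (model_cover_incident e1K ve1, model_cover_incident e2K ve2).
exists x, y; split=> //; have [-> | xy] := eqVneq x y; first by rewrite ?eqxx.
by rewrite (dual_adj (subsetP (model_vertices phiK) v vK) xv yv xy) orbT.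
Qed.

Lemma model_merge v : v \in K.1 -> incident K v != set0 ->
  exists phi', dil_model (Defs.merge K v) phi'.
Proof.
have [wfK KH branch disj cover] := phiK.
move=> vK /set0Pn[e0 e0v].
set I := incident K v; set N := (\bigcup_(e in I) e) :\ v.
set B := \bigcup_(e in I) phi e.
have inI e : e \in I -> e \in K.2 /\ v \in e by move/setIdP.
have old g : g \in (Defs.merge K v).2 -> g != N -> g \in K.2 /\ g \notin I.
  by rewrite !inE => /orP[/andP[gI gK] _ | /eqP->]; rewrite ?eqxx.
have disjB g : g \in K.2 -> g \notin I -> [disjoint phi g & B].
  move=> gK gI; apply: bigcup_disjoint => e eI; apply: disj (inI e eI).1 _ => //.
  by apply: contraNneq gI => ->.
exists (fun g => if g == N then B else phi g); split=> //=.
- move=> g; rewrite !inE => /orP[/andP[_ /wfK] // | /eqP->].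
  by apply: subset_trans (subD1set _ _) _; apply/bigcupsP => e /inI[/wfK].
- move=> g gM; case: (eqVneq g N) => [_ | gN].
    have [/set0Pn[x xe0] _ _] := branch e0 (inI e0 e0v).1.
    split; last exact: model_star_connected.
      by apply/set0Pn; exists x; apply/bigcupP; exists e0.
    by apply/bigcupsP => e /inI[/branch[]].
  by case: (old g gM gN) => gK _; apply: branch.
- move=> g1 g2 g1M g2M g12.
  case: (eqVneq g1 N) => [g1N | g1N]; case: (eqVneq g2 N) => [g2N | g2N].
  + by rewrite g1N g2N eqxx in g12.
  + by rewrite disjoint_sym; case: (old g2 g2M g2N); apply: disjB.
  + by case: (old g1 g1M g1N); apply: disjB.
  + by case: (old g1 g1M g1N) (old g2 g2M g2N) => [g1K _] [g2K _]; apply: disj.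
- move=> g w gM; case: (eqVneq g N) => [-> /setD1P[_ /bigcupP[e eI we]] | gN].
    have [x xe wx] := cover e w (inI e eI).1 we.
    by exists x => //; apply/bigcupP; exists e.
  by case: (old g gM gN) => gK _; apply: cover.
Qed.

Lemma model_step K' : dil_step K K' -> exists phi', dil_model K' phi'.
Proof.
case=> [v _ | e f _ _ _ | v vK Iv].
- exact: model_del_vertex.
- by exists phi; apply: model_del_edge.
- exact: model_merge.
Qed.

Lemma dual_minor_of_model : is_minor (dual K) (dual H).
Proof.
exists phi; split=> [e /(model_branch phiK) // |]; split=> [|e1 e2 e1K e2K].
  exact: model_disjoint phiK.
move=> /andP[e12 /existsP[_ /andP[/imsetP[w wK ->]]]].
rewrite !inE => /andP[/andP[_ we1] /andP[_ we2]].
have [[x xe1 xw] [y ye2 yw]] := (model_cover_incident e1K we1, model_cover_incident e2K we2).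
have xy : x != y.
  apply: contraTneq (model_disjoint phiK e1K e2K e12) => eq_xy.
  by apply/pred0Pn; exists x; rewrite /= xe1 eq_xy.
by exists x, y; split=> //; apply: dual_adj (subsetP (model_vertices phiK) w wK) xw yw xy.
Qed.

End DilutionModel.

Lemma dil_reach_model (T : finType) (H K : hgraph T) :
  wf_hg H -> dil_reach H K -> exists phi, dil_model H K phi.
Proof.
move=> wfH; elim=> [|K1 K2 _ [phi phiK1] step].
  by exists (fun e => [set e]); apply: model_refl.
exact: (model_step phiK1 step).
Qed.

Lemma is_minor_subgraph (T1 T2 T3 : finType) (G1 : hgraph T1) (G2 : hgraph T2)
    (F : hgraph T3) (h : T1 -> T2) :
  is_minor G2 F -> {in G1.1 &, injective h} -> {in G1.1, forall u, h u \in G2.1} ->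
  {in G1.1 &, forall u v, primal_adj G1 u v -> primal_adj G2 (h u) (h v)} ->
  is_minor G1 F.
Proof.
move=> [mu [branch [disj adj]]] h_inj hG h_adj.
exists (fun u => mu (h u)); split=> [u uG|]; first exact/branch/hG.
split=> u v uG vG uv; last exact: adj (hG u uG) (hG v vG) (h_adj u v uG vG uv).
by apply: disj; rewrite ?hG //; apply: contra uv => /eqP/h_inj->.
Qed.

Lemma dual_iso_embedding (T1 T2 : finType) (K : hgraph T1) (G : hgraph T2) :
  wf_hg K -> hiso K (dual G) -> {in G.1 &, injective (incident G)} ->
  exists h : T2 -> {set T1}, [/\ {in G.1 &, injective h},
    {in G.1, forall u, h u \in K.2} &
    {in G.1 &, forall u v, primal_adj G u v -> primal_adj (dual K) (h u) (h v)}].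
Proof.
move=> wfK [f [f_inj [fK1 fK2]]] I_inj.
have [s sP] := imset_section (fun e => f @: e) K.2.
pose h u := s (incident G u).
have hP u : u \in G.1 -> h u \in K.2 /\ f @: h u = incident G u.
  by move=> uG; apply: sP; rewrite -fK2 imset_f.
have h_inj : {in G.1 &, injective h}.
  by move=> u v uG vG eq_h; apply: I_inj; rewrite // -(hP u uG).2 -(hP v vG).2 eq_h.
exists h; split=> // [u /hP[] // | u v uG vG /andP[uv /existsP[g /and3P[gG ug vg]]]].
have /imsetP[w wK gw] : g \in f @: K.1 by rewrite fK1.
have w_in u' : u' \in G.1 -> u' \in g -> h u' \in incident K w.
  move=> u'G u'g; have [hK hI] := hP u' u'G.
  have /imsetP[w' w'h gw'] : g \in f @: h u' by rewrite hI inE gG.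
  have -> : w = w' by apply: f_inj; rewrite ?gw -?gw' //; apply: (subsetP (wfK _ hK)).
  by rewrite inE hK.
apply: (dual_adj wK (w_in u uG ug) (w_in v vG vg)).
by apply: contra uv => /eqP/h_inj->.
Qed.

Lemma graph_twins_cover (T : finType) (G : hgraph T) u v :
  is_graph G -> hconnected G -> u \in G.1 -> u != v ->
  incident G u = incident G v -> G.1 \subset [set u; v].
Proof.
move=> [_ G2] Gconn uG uv Iuv.
have closed_uv a b : a \in [set u; v] -> primal_adj G a b -> b \in [set u; v].
  move=> auv /andP[_ /existsP[g /and3P[gG ag bg]]].
  have gI : g \in incident G a by rewrite inE gG ag.
  have gIu : g \in incident G u by case/set2P: auv gI => -> //; rewrite Iuv.
  have [ug vg] : u \in g /\ v \in g.
    by move: gIu (gIu); rewrite {2}Iuv !inE => /andP[_ ->] /andP[_ ->].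
  suff -> : [set u; v] = g by [].
  by apply/eqP; rewrite eqEcard subUset !sub1set ug vg G2 // cards2 uv.
have path_in a p : a \in [set u; v] -> path (primal_adj_in G G.1) a p ->
    last a p \in [set u; v].
  elim: p a => //= b p IH a auv /andP[/and3P[_ _ ab] ph].
  exact: IH (closed_uv a b auv ab) ph.
apply/subsetP => w wG; have /connectP[p ph ->] := Gconn u w uG wG.
by apply: path_in ph; rewrite set21.
Qed.

Lemma dual_adj_of_hdeg (T : finType) (H : hgraph T) :
  1 < hdeg H -> exists x y, [/\ x \in H.2, y \in H.2 & primal_adj (dual H) x y].
Proof.
move=> degH.
have [z /andP[zH /card_gt1P[x [y [xz yz xy]]]] | noz] :=
  pickP [pred z in H.1 | 1 < #|incident H z|].
  exists x, y; split; [by case/setIdP: xz | by case/setIdP: yz |].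
  exact: dual_adj zH xz yz xy.
move: degH; rewrite ltnNge => /negP[]; apply/bigmax_leqP => z zH.
by move: (noz z); rewrite /= zH ltnNge => /negbFE.
Qed.

Lemma is_minor_of_pair (T1 T2 : finType) (G : hgraph T1) (F : hgraph T2) u v x y :
  primal_adj F x y -> x \in F.1 -> y \in F.1 -> G.1 \subset [set u; v] ->
  is_minor G F.
Proof.
move=> xy xF yF Guv; have /andP[x_ne_y _] := xy.
have other a b : a \in G.1 -> b \in G.1 -> a != b -> (a == u) = (b != u).
  move=> aG bG ab; have [eau | au] := eqVneq a u; have [ebu | bu] := eqVneq b u => //.
    by rewrite eau ebu eqxx in ab.
  move: ab (subsetP Guv a aG) (subsetP Guv b bG).
  by rewrite !inE (negbTE au) (negbTE bu) /= => ab /eqP av /eqP bv; rewrite av bv eqxx in ab.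
exists (fun w => if w == u then [set x] else [set y]); split; [|split].
- have branch1 z : z \in F.1 ->
      [/\ [set z] != set0, [set z] \subset F.1 & connected_in F [set z]].
    by move=> zF; split; [apply/set0Pn; exists z; rewrite inE | rewrite sub1set |
      exact: connected_in1].
  by move=> w _; case: ifP => _; apply: branch1.
- move=> a b aG bG ab; rewrite (other a b aG bG ab).
  by case: eqP => _; rewrite /= disjoints1 inE // eq_sym.
- move=> a b aG bG /andP[ab _]; rewrite (other a b aG bG ab).
  case: eqP => _ /=; first by exists y, x; rewrite !inE primal_adj_sym.
  by exists x, y; rewrite !inE.
Qed.

Theorem lemmaA1 (TG TH : finType) (G : hgraph TG) (H : hgraph TH) :
  is_graph G -> hconnected G -> wf_hg H -> hdeg H = 2 ->
  dilution (dual G) H -> is_minor G (dual H).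
Proof.
move=> Ggraph Gconn wfH degH [K [HK isoKG]].
have [phi phiK] := dil_reach_model wfH HK.
have [/dinjectiveP I_inj | /dinjectivePn[u uG [v /andP[vu _] Iuv]]] :=
  boolP (dinjectiveb (incident G) G.1).
- have [h [h_inj hK h_adj]] := dual_iso_embedding (model_wf phiK) isoKG I_inj.
  exact: is_minor_subgraph (dual_minor_of_model phiK) h_inj hK h_adj.
- have deg_gt1 : 1 < hdeg H by rewrite degH.
  have [x [y [xH yH xy]]] := dual_adj_of_hdeg deg_gt1.
  have uv : u != v by rewrite eq_sym.
  exact: is_minor_of_pair xy xH yH (graph_twins_cover Ggraph Gconn uG uv Iuv).
Qed.
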